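(* Let $\epsilon=\mu=\gamma=\chi=1$, $M>0$, $T>0$. Consider the Crank–Nicolson bound-preserving scheme started from $0\le\rho_h^0\le M$ (nodewise), $c_h^0\in X_h$, with $\rho_h^{-1}=\rho_h^0$, $c_h^{-1}=\tilde c_h^0=c_h^0$, $\lambda_h^0\equiv0$, $\xi_h^0=0$. Then there is a constant $C>0$ depending only on $M$ and $T$ such that for all $m\ge1$ with $m\delta t\le T$, $$\|\rho_h^m\|^2+\|\nabla_hc_h^m\|^2+\delta t\sum_{n=0}^{m-1}\|\Delta_h\tilde c_h^{n+\frac12}\|^2+\tfrac{\delta t^2}4\|\lambda_h^mg'(\rho_h^m)+\xi_h^m\|^2+\delta t\sum_{n=0}^{m-1}\|\nabla_h\tilde\rho_h^{n+\frac12}\|^2\le C\big(\|\rho_h^0\|^2+\|\nabla_hc_h^0\|^2\big).$$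
   Context: Discrete setting: $\Sigma_h$ finite set of nodes in $\bar\Omega\subset\mathbb R^d$; $X_h$ = real grid functions on $\Sigma_h$, nonlinear functions act pointwise. $[u,v]=\sum_z\beta_zu(z)v(z)$, $\beta_z>0$ (vector version $\sum_z\beta_zw(z)\cdot w'(z)$), $\|u\|=[u,u]^{1/2}$, $|\Omega|=[1,1]$. $\nabla_h,\nabla_h\cdot$ satisfy $[\nabla_h\cdot w,v]=-[w,\nabla_hv]$, $\nabla_h1=0$ (periodic boundary conditions); $\Delta_h=\nabla_h\cdot\nabla_h$. $\sigma,\delta t>0$. $\eta(\rho)=\frac{\rho(M-\rho)}M$, $g(\rho)=\rho(M-\rho)$, $g'(\rho)=M-2\rho$. Notation $\tilde c_h^{n+\frac12}=\frac{\tilde c_h^{n+1}+c_h^n}2$, $\tilde\rho_h^{n+\frac12}=\frac{\tilde\rho_h^{n+1}+\rho_h^n}2$, $\rho_h^{n+\frac12}=\frac{\rho_h^{n+1}+\rho_h^n}2$. Crank–Nicolson bound-preserving scheme ($\epsilon=\mu=\gamma=\chi=1$), for $n\ge0$: Step 1: $\frac{\tilde c_h^{n+1}-c_h^n}{\delta t}=\Delta_h\tilde c_h^{n+\frac12}+\frac32\rho_h^n-\frac12\rho_h^{n-1}$. Step 2: $\frac{\tilde\rho_h^{n+1}-\rho_h^n}{\delta t}=\Delta_h\tilde\rho_h^{n+\frac12}-\nabla_h\cdot(\eta(\frac32\rho_h^n-\frac12\rho_h^{n-1})\nabla_h(\frac32c_h^n-\frac12c_h^{n-1}))+\lambda_h^ng'(\rho_h^n)+\xi_h^n$.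 Step 3: find $\rho_h^{n+1},\lambda_h^{n+1}\in X_h$, $\xi_h^{n+1}\in\mathbb R$ with $\frac{\rho_h^{n+1}-\tilde\rho_h^{n+1}}{\delta t}=\frac{\lambda_h^{n+1}g'(\rho_h^{n+1})+\xi_h^{n+1}-\lambda_h^ng'(\rho_h^n)-\xi_h^n}2$ nodewise, $g(\rho_h^{n+1})\ge0$, $\lambda_h^{n+1}\ge0$, $\lambda_h^{n+1}g(\rho_h^{n+1})=0$ at every node, $[\rho_h^{n+1},1]=[\rho_h^0,1]$. Step 4: find $c_h^{n+1}$ and scalar $\theta_h^{n+\frac12}$ with $\frac{c_h^{n+1}-\tilde c_h^{n+1}}{\delta t}=\theta_h^{n+\frac12}$ and $\frac{E_h^{n+1}-E_h^n}{\delta t}=-[\eta(\rho_h^{n+\frac12})|\nabla_h(\log(\rho_h^{n+\frac12}+\sigma)-\tilde c_h^{n+\frac12})|^2+|\frac{\tilde c_h^{n+1}-\tilde c_h^n}{\delta t}|^2,1]$, where $E_h^j=[\rho_h^j\log(\rho_h^j+\sigma)+(M-\rho_h^j)\log(1-\rho_h^j/M+\sigma)-\rho_h^jc_h^j+\frac12|\nabla_hc_h^j|^2,1]$. *)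

From mathcomp Require Import all_boot all_order all_algebra.
From mathcomp Require Import all_classical all_reals all_analysis.
Set Implicit Arguments. Unset Strict Implicit. Unset Printing Implicit Defensive.
Import Order.TTheory GRing.Theory Num.Theory.
Local Open Scope ring_scope.

Section CNDefs.
Variables (R : realType) (S : finType) (d : nat).

Definition ipr (beta : S -> R) (u v : S -> R) : R :=
  \sum_(z : S) beta z * (u z * v z).
Definition vipr (beta : S -> R) (w w' : S -> 'I_d -> R) : R :=
  \sum_(z : S) beta z * (\sum_(i < d) w z i * w' z i).
Definition nrm2 beta (u : S -> R) := ipr beta u u.
Definition vnrm2 beta (w : S -> 'I_d -> R) := vipr beta w w.

Definition onef : S -> R := fun _ => 1.
Definition avg (u v : S -> R) : S -> R := fun z => (u z + v z) / 2.
Definition extr (u v : S -> R) : S -> R := fun z => 3/2 * u z - 1/2 * v z.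

Definition lap (grad : (S -> R) -> S -> 'I_d -> R)
  (div : (S -> 'I_d -> R) -> S -> R) (u : S -> R) : S -> R := div (grad u).

Definition eta (M r : R) : R := r * (M - r) / M.
Definition gg (M r : R) : R := r * (M - r).
Definition gg' (M r : R) : R := M - 2 * r.

Definition energy beta (grad : (S -> R) -> S -> 'I_d -> R) (M sigma : R)
  (rho c : S -> R) : R :=
  ipr beta (fun z => rho z * ln (rho z + sigma)
                    + (M - rho z) * ln (1 - rho z / M + sigma)
                    - rho z * c z
                    + 1/2 * (\sum_(i < d) grad c z i ^+ 2)) onef.

Definition discrete_setting beta (grad : (S -> R) -> S -> 'I_d -> R)
  (div : (S -> 'I_d -> R) -> S -> R) : Prop :=
  [/\ forall z, 0 < beta z,
      forall (w : S -> 'I_d -> R) (v : S -> R), ipr beta (div w) v = - vipr beta w (grad v)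
    & grad onef = (fun _ _ => 0)].

(* Sequences are indexed by nat: rho n = rho_h^n, c n = c_h^n, ct n = tilde c_h^n,
   rhot n = tilde rho_h^n (n >= 1; rhot 0 unused), lam n = lambda_h^n, xi n = xi_h^n.
   The index n.-1 at n = 0 gives 0, which encodes rho_h^{-1}=rho_h^0, c_h^{-1}=c_h^0. *)
Definition CN_scheme beta (grad : (S -> R) -> S -> 'I_d -> R)
  (div : (S -> 'I_d -> R) -> S -> R) (M sigma dt : R)
  (rho c ct rhot lam : nat -> S -> R) (xi : nat -> R) : Prop :=

      (forall z, 0 <= rho 0%N z <= M) /\
      ct 0%N = c 0%N /\
      lam 0%N = (fun _ => 0) /\
      xi 0%N = 0 /\
      (forall (n : nat) z,
         (ct n.+1 z - c n z) / dt
         = lap grad div (avg (ct n.+1) (c n)) z + 3/2 * rho n z - 1/2 * rho n.-1 z) /\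
      (forall (n : nat) z,
         (rhot n.+1 z - rho n z) / dt
         = lap grad div (avg (rhot n.+1) (rho n)) z
           - div (fun y i => eta M (extr (rho n) (rho n.-1) y)
                             * grad (extr (c n) (c n.-1)) y i) z
           + lam n z * gg' M (rho n z) + xi n) /\
      (forall n : nat,
         (forall z, (rho n.+1 z - rhot n.+1 z) / dt
            = (lam n.+1 z * gg' M (rho n.+1 z) + xi n.+1
               - lam n z * gg' M (rho n z) - xi n) / 2)
         /\ (forall z, [/\ 0 <= gg M (rho n.+1 z), 0 <= lam n.+1 z
                          & lam n.+1 z * gg M (rho n.+1 z) = 0])
         /\ ipr beta (rho n.+1) onef = ipr beta (rho 0%N) onef) /\
      (forall n : nat,
         exists theta : R,
           (forall z, (c n.+1 z - ct n.+1 z) / dt = theta)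
           /\ (energy beta grad M sigma (rho n.+1) (c n.+1)
               - energy beta grad M sigma (rho n) (c n)) / dt
              = - ipr beta (fun z =>
                    eta M (avg (rho n.+1) (rho n) z)
                    * (\sum_(i < d)
                         grad (fun y => ln (avg (rho n.+1) (rho n) y + sigma)
                                        - avg (ct n.+1) (c n) y) z i ^+ 2)
                    + ((ct n.+1 z - ct n z) / dt) ^+ 2) onef).

End CNDefs.

From mathcomp Require Import all_boot all_order all_algebra.
From mathcomp Require Import all_classical all_reals all_analysis.
From mathcomp Require Import ring lra.
Import Order.TTheory GRing.Theory Num.Theory.
Set Implicit Arguments. Unset Strict Implicit. Unset Printing Implicit Defensive.
Local Open Scope ring_scope.

(* Testing the heat step for [c] against
   [- Delta_h c~^{n+1/2}] bounds the growth of [||grad_h c||^2] by [||rho||^2];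
   testing the transport step against [rho~^{n+1/2}] bounds the growth of
   [||rho||^2 + dt^2/4 ||lambda g'(rho) + xi||^2] by [||grad_h c||^2], because
   [0 <= rho <= M] keeps the mobility of the extrapolated density below [M].
   The projection step only adds [[rho^{n+1}, lambda g'(rho) + xi] <= 0], which
   follows from mass conservation and nodewise complementarity.  A discrete
   Gronwall inequality closes the argument. *)

Section WeightedSums.
Variables (R : realType) (S : finType) (d : nat) (beta : S -> R).

Definition wsum (f : S -> R) : R := \sum_z beta z * f z.
Definition vwsum (w : S -> 'I_d -> R) : R := \sum_z beta z * \sum_(i < d) w z i.

Lemma eq_wsum f g : f =1 g -> wsum f = wsum g.
Proof. by move=> fg; apply: eq_bigr => z _; rewrite fg. Qed.

Lemma wsumD f g : wsum (fun z => f z + g z) = wsum f + wsum g.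
Proof. by rewrite /wsum -big_split; apply: eq_bigr => z _; rewrite mulrDr. Qed.

Lemma wsumN f : wsum (fun z => - f z) = - wsum f.
Proof. by rewrite /wsum -sumrN; apply: eq_bigr => z _; rewrite mulrN. Qed.

Lemma wsumZ k f : wsum (fun z => k * f z) = k * wsum f.
Proof. by rewrite /wsum mulr_sumr; apply: eq_bigr => z _; rewrite mulrCA. Qed.

Lemma wsum0 : wsum (fun _ => 0) = 0.
Proof. by rewrite /wsum big1 // => z _; rewrite mulr0. Qed.

Lemma ler_wsum f g : (forall z, 0 <= beta z) -> (forall z, f z <= g z) ->
  wsum f <= wsum g.
Proof. by move=> beta_ge0 fg; apply: ler_sum => z _; rewrite ler_wpM2l. Qed.

Lemma wsum1_gt0 (z0 : S) : (forall z, 0 < beta z) -> 0 < wsum (fun _ => 1).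
Proof.
move=> beta_gt0; rewrite /wsum (bigD1 z0) //= mulr1.
by rewrite ltr_pwDl // sumr_ge0 // => z _; rewrite mulr1 ltW.
Qed.

Lemma vwsumD w w' :
  vwsum (fun z i => w z i + w' z i) = vwsum w + vwsum w'.
Proof.
by rewrite /vwsum -big_split; apply: eq_bigr => z _; rewrite big_split mulrDr.
Qed.

Lemma vwsumN w : vwsum (fun z i => - w z i) = - vwsum w.
Proof.
by rewrite /vwsum -sumrN; apply: eq_bigr => z _; rewrite sumrN mulrN.
Qed.

Lemma vwsumZ k w : vwsum (fun z i => k * w z i) = k * vwsum w.
Proof.
rewrite /vwsum mulr_sumr; apply: eq_bigr => z _.
by rewrite -mulr_sumr mulrCA.
Qed.

Lemma eq_vwsum w w' : (forall z i, w z i = w' z i) -> vwsum w = vwsum w'.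
Proof.
by move=> ww'; apply: eq_bigr => z _; congr (_ * _); apply: eq_bigr => i _.
Qed.

Lemma ler_vwsum w w' : (forall z, 0 <= beta z) -> (forall z i, w z i <= w' z i) ->
  vwsum w <= vwsum w'.
Proof.
move=> beta_ge0 ww'; apply: ler_sum => z _; rewrite ler_wpM2l //.
by apply: ler_sum => i _.
Qed.

Lemma nrm2E u : nrm2 beta u = wsum (fun z => u z * u z). Proof. by []. Qed.

Lemma vnrm2E w : vnrm2 (d:=d) beta w = vwsum (fun z i => w z i * w z i). Proof. by []. Qed.

Lemma nrm2_ge0 u : (forall z, 0 <= beta z) -> 0 <= nrm2 beta u.
Proof. by move=> beta_ge0; apply: sumr_ge0 => z _; rewrite mulr_ge0 // -expr2 sqr_ge0. Qed.

Lemma vnrm2_ge0 w : (forall z, 0 <= beta z) -> 0 <= vnrm2 (d:=d) beta w.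
Proof.
move=> beta_ge0; apply: sumr_ge0 => z _; rewrite mulr_ge0 //.
by apply: sumr_ge0 => i _; rewrite -expr2 sqr_ge0.
Qed.

Lemma ipr_onef u : ipr beta u (@onef R S) = wsum u.
Proof. by apply: eq_wsum => z; rewrite /onef mulr1. Qed.

Lemma wsum_step dt (a b F : S -> R) : dt != 0 ->
  (forall z, (a z - b z) / dt = F z) -> wsum a - wsum b = dt * wsum F.
Proof.
move=> dt_neq0 eqF; rewrite -wsumN -wsumD -wsumZ; apply: eq_wsum => z.
by rewrite -eqF mulrC divfK.
Qed.

End WeightedSums.

Ltac wsum_collect :=
  repeat (rewrite -wsumZ || rewrite -wsumN || rewrite -wsumD).
Ltac vwsum_collect :=
  repeat (rewrite -vwsumZ || rewrite -vwsumN || rewrite -vwsumD).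

Section Inequalities.
Variable R : realType.

Lemma eta_extr_sqr_le (M p q : R) : 0 < M -> 0 <= p <= M -> 0 <= q <= M ->
  eta M (3/2 * p - 1/2 * q) ^+ 2 <= M ^+ 2.
Proof.
move=> M_gt0 /andP[p_ge0 p_leM] /andP[q_ge0 q_leM].
set r := 3/2 * p - 1/2 * q; set t := r * (M - r).
have r_ge : - (M / 2) <= r by rewrite /r; lra.
have r_le : r <= 3 * M / 2 by rewrite /r; lra.
have t_le : t <= M ^+ 2 by rewrite /t; nra.
have t_ge : - M ^+ 2 <= t by rewrite /t; nra.
rewrite /eta -/r -/t expr_div_n ler_pdivrMr ?exprn_gt0 //; nra.
Qed.

Lemma extr_young (M e x y g : R) : e ^+ 2 <= M ^+ 2 ->
  e * (3/2 * x - 1/2 * y) * g <= M ^+ 2 / 2 * (3 * (x * x) + y * y) + 1/2 * (g * g).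
Proof.
move=> e_le; set s := 3/2 * x - 1/2 * y.
have s_le : s ^+ 2 <= 3 * (x * x) + y * y.
  by have := sqr_ge0 (x + y); rewrite /s; nra.
have es_le : e ^+ 2 * s ^+ 2 <= M ^+ 2 * s ^+ 2 by rewrite ler_wpM2r ?sqr_ge0.
have := ler_wpM2l (sqr_ge0 M) s_le; have := sqr_ge0 (e * s - g); nra.
Qed.

Lemma gg_ge0_bounds (M r : R) : 0 < M -> 0 <= gg M r -> 0 <= r <= M.
Proof. by rewrite /gg => M_gt0 g_ge0; apply/andP; split; nra. Qed.

(* [m] and [Om] stand for the mass and the measure of the domain, so [Om * r - m]
   is [Om] times the deviation of [r] from its mean. *)
Lemma complementarity_sign (M Om m r l : R) : 0 < M -> 0 <= m <= Om * M ->
  0 <= gg M r -> 0 <= l -> l * gg M r = 0 -> (Om * r - m) * (l * gg' M r) <= 0.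
Proof.
rewrite /gg /gg' => M_gt0 /andP[m_ge0 m_le] g_ge0 l_ge0.
have [->|l_neq0] := eqVneq l 0; first by rewrite !mul0r mulr0.
move/eqP; rewrite mulf_eq0 (negbTE l_neq0) /= mulf_eq0 => /orP[/eqP->|].
  by rewrite mulr0 sub0r mulNr oppr_le0 !mulr_ge0 //; lra.
rewrite subr_eq0 => /eqP <-.
have : 0 <= (Om * M - m) * (l * M) by rewrite !mulr_ge0 //; lra.
lra.
Qed.

Definition gronwall_const (K T : R) : R := 1 + 2 * K * T * expR (2 * K * T).

Lemma gronwall_const_gt0 (K T : R) : 0 <= K -> 0 <= T -> 0 < gronwall_const K T.
Proof.
move=> K_ge0 T_ge0; rewrite /gronwall_const.
have : 0 <= 2 * K * T * expR (2 * K * T) by rewrite !mulr_ge0 ?expR_ge0.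
lra.
Qed.

Section Gronwall.
Variables (Y D : nat -> R) (dt K : R).
Hypotheses (dt_gt0 : 0 < dt) (K_ge0 : 0 <= K).
Hypotheses (Y_ge0 : forall n, 0 <= Y n) (D_ge0 : forall n, 0 <= D n).
Hypothesis Y_step : forall n, Y n.+1 - Y n + dt * D n <= dt * K * (Y n + Y n.-1).

Lemma gronwall_geometric n :
  Y n <= (1 + 2 * dt * K) ^+ n * Y 0%N /\ Y n.-1 <= (1 + 2 * dt * K) ^+ n * Y 0%N.
Proof.
have dtK_ge0 : 0 <= dt * K by rewrite mulr_ge0 // ltW.
elim: n => [|n [Yn Ynm]]; first by rewrite expr0 mul1r.
have : 0 <= (1 + 2 * dt * K) ^+ n * Y 0%N by rewrite mulr_ge0 ?exprn_ge0 //; lra.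
have := ler_wpM2l dtK_ge0 Yn; have := ler_wpM2l dtK_ge0 Ynm.
have := Y_step n; have := mulr_ge0 (ltW dt_gt0) (D_ge0 n).
rewrite exprS -mulrA; split; nra.
Qed.

Lemma discrete_gronwall T m : m%:R * dt <= T ->
  Y m + dt * \sum_(n < m) D n <= gronwall_const K T * Y 0%N.
Proof.
move=> mT; set E := expR (2 * K * T).
have dtK_ge0 : 0 <= dt * K by rewrite mulr_ge0 // ltW.
have pow_le n : (n <= m)%N -> (1 + 2 * dt * K) ^+ n <= E.
  move=> le_nm; apply: (@le_trans _ _ (expR (2 * dt * K) ^+ n)).
    by rewrite lerXn2r ?nnegrE ?expR_ge0 ?expR_ge1Dx //; lra.
  rewrite -expRM_natl ler_expR.
  have : n%:R * dt <= T by apply: le_trans mT; rewrite ler_wpM2r ?ler_nat // ltW.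
  by move/(ler_wpM2l (mulr_ge0 (ler0n _ 2) K_ge0)); lra.
have telescope k : Y k + dt * \sum_(n < k) D n
    <= Y 0%N + dt * K * \sum_(n < k) (Y n + Y n.-1).
  elim: k => [|k IH]; first by rewrite !big_ord0 !mulr0 !addr0.
  by rewrite !big_ord_recr /= !mulrDr; have := Y_step k; lra.
have sum_le : \sum_(n < m) (Y n + Y n.-1) <= m%:R * (2 * E * Y 0%N).
  rewrite -[m in X in _ <= X]card_ord mulr_natl -sumr_const.
  apply: ler_sum => n _.
  have [Yn Ynm] := gronwall_geometric n.
  have := ler_wpM2r (Y_ge0 0%N) (pow_le n (ltnW (ltn_ord n))); lra.
have : m%:R * dt * (2 * K * E * Y 0%N) <= T * (2 * K * E * Y 0%N).
  by rewrite ler_wpM2r // !mulr_ge0 ?expR_ge0.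
have := ler_wpM2l dtK_ge0 sum_le; have := telescope m.
rewrite /gronwall_const -/E; nra.
Qed.

End Gronwall.

Section Complementarity.
Variables (S : finType) (beta : S -> R).
Hypothesis beta_gt0 : forall z, 0 < beta z.

(* Since [l g'(r) + x] has zero mean, [r] may be replaced by its deviation from
   the mean of [r0], and nodewise complementarity then gives the sign. *)
Lemma wsum_lagrange_le0 (M x : R) (r r0 l : S -> R) : 0 < M ->
  (forall z, 0 <= r0 z <= M) -> wsum beta r = wsum beta r0 ->
  wsum beta (fun z => l z * gg' M (r z) + x) = 0 ->
  (forall z, [/\ 0 <= gg M (r z), 0 <= l z & l z * gg M (r z) = 0]) ->
  wsum beta (fun z => r z * (l z * gg' M (r z) + x)) <= 0.
Proof.
move=> M_gt0 r0_bd mass mean0 compl.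
have beta_ge0 z : 0 <= beta z by apply: ltW.
have [z0 _ | S_empty] := pickP (predT : pred S); last by rewrite /wsum big_pred0.
set Om := wsum beta (fun _ => 1); set m := wsum beta r0.
set A := wsum beta (fun z => r z * (l z * gg' M (r z))).
set B := wsum beta (fun z => l z * gg' M (r z)).
have Om_gt0 : 0 < Om := wsum1_gt0 z0 beta_gt0.
have m_bd : 0 <= m <= Om * M.
  rewrite -(wsum0 beta) mulrC -wsumZ; apply/andP; split; apply: ler_wsum => // z;
    have := r0_bd z; lra.
have rP : wsum beta (fun z => r z * (l z * gg' M (r z) + x)) = A + x * m.
  by rewrite /m -mass /A; wsum_collect; apply: eq_wsum => z; ring.
have mean_B : B + x * Om = 0.
  by rewrite -mean0 /B /Om; wsum_collect; apply: eq_wsum => z; ring.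
(* Otherwise [wsum_collect] would unfold [m] inside the summands below. *)
clearbody Om m.
have centred : Om * wsum beta (fun z => r z * (l z * gg' M (r z) + x))
    = wsum beta (fun z => (Om * r z - m) * (l z * gg' M (r z))).
  rewrite rP (_ : Om * (A + x * m) = Om * A - m * B); last first.
    by rewrite (_ : B = - (x * Om)); [ring | lra].
  by rewrite /A /B; wsum_collect; apply: eq_wsum => z; ring.
have : wsum beta (fun z => (Om * r z - m) * (l z * gg' M (r z))) <= 0.
  rewrite -(wsum0 beta); apply: ler_wsum => // z.
  by have [g_ge0 l_ge0 lg0] := compl z; apply: complementarity_sign.
by rewrite -centred pmulr_rle0.
Qed.

End Complementarity.
End Inequalities.

Section DiscreteCalculus.
Variables (R : realType) (S : finType) (d : nat) (beta : S -> R).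
Variables (grad : (S -> R) -> S -> 'I_d -> R) (div : (S -> 'I_d -> R) -> S -> R).
Hypothesis Hds : discrete_setting beta grad div.

Let beta_gt0 z : 0 < beta z. Proof. by case: Hds. Qed.
Let beta_ge0 z : 0 <= beta z. Proof. exact: ltW. Qed.

Let summation_by_parts w v : wsum beta (fun z => div w z * v z)
  = - vwsum beta (fun z i => w z i * grad v z i).
Proof. by case: Hds => _ adj _; exact: adj. Qed.

(* [grad] is only assumed to be adjoint to [div]; testing against the field
   concentrated at one node and one direction recovers each value of [grad]. *)
Lemma grad_lincomb k1 k2 u v :
  grad (fun z => k1 * u z + k2 * v z) = fun z i => k1 * grad u z i + k2 * grad v z i.
Proof.
apply/funext => z; apply/funext => i.
pose w y j : R := ((y == z) && (j == i))%:R.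
have probe f : vwsum beta (fun y j => w y j * grad f y j) = beta z * grad f z i.
  rewrite /vwsum (bigD1 z) //= [X in _ + X]big1 => [|y /negbTE yz]; last first.
    by rewrite big1 ?mulr0 // => j _; rewrite /w yz mul0r.
  rewrite addr0 (bigD1 i) //= big1 => [|j /negbTE ji].
    by rewrite /w !eqxx mul1r addr0.
  by rewrite /w eqxx ji mul0r.
have lin : wsum beta (fun y => div w y * (k1 * u y + k2 * v y))
    = k1 * wsum beta (fun y => div w y * u y) + k2 * wsum beta (fun y => div w y * v y).
  by wsum_collect; apply: eq_wsum => y; ring.
apply: (mulfI (lt0r_neq0 (beta_gt0 z))).
rewrite -probe -[LHS]opprK -summation_by_parts lin !summation_by_parts !probe.
ring.
Qed.

Lemma grad_avg a b : grad (avg a b) = fun z i => (grad a z i + grad b z i) / 2.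
Proof.
rewrite (_ : avg a b = fun z => 2^-1 * a z + 2^-1 * b z); last first.
  by apply/funext => z; rewrite /avg; ring.
by rewrite grad_lincomb; apply/funext => z; apply/funext => i; ring.
Qed.

Lemma gradB a b : grad (fun z => a z - b z) = fun z i => grad a z i - grad b z i.
Proof.
rewrite (_ : (fun z => a z - b z) = fun z => 1 * a z + (-1) * b z); last first.
  by apply/funext => z; ring.
by rewrite grad_lincomb; apply/funext => z; apply/funext => i; ring.
Qed.

Lemma grad_extr a b :
  grad (extr a b) = fun z i => 3/2 * grad a z i - 1/2 * grad b z i.
Proof.
rewrite (_ : extr a b = fun z => 3/2 * a z + (- (1/2)) * b z); last first.
  by apply/funext => z; rewrite /extr; ring.
by rewrite grad_lincomb; apply/funext => z; apply/funext => i; ring.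
Qed.

Lemma grad_addC u k : grad (fun z => u z + k) = grad u.
Proof.
have [_ _ grad1] := Hds.
rewrite (_ : (fun z => u z + k) = fun z => 1 * u z + k * onef R z); last first.
  by apply/funext => z; rewrite /onef; ring.
by rewrite grad_lincomb grad1; apply/funext => z; apply/funext => i; ring.
Qed.

Lemma wsum_div w : wsum beta (div w) = 0.
Proof.
have [_ _ grad1] := Hds.
have := summation_by_parts w (@onef R S); rewrite grad1 /vwsum big1 ?oppr0 => [<-|z _].
  by apply: eq_wsum => z; rewrite /onef mulr1.
by rewrite big1 ?mulr0 // => i _; rewrite mulr0.
Qed.

Lemma wsum_div_step dt (a b u F : S -> R) w : dt != 0 ->
  (forall z, (a z - b z) / dt = lap grad div u z - div w z + F z) ->
  wsum beta a - wsum beta b = dt * wsum beta F.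
Proof.
move=> dt_neq0 step; rewrite (wsum_step beta dt_neq0 step); congr (_ * _).
by rewrite !wsumD wsumN /lap !wsum_div subrr add0r.
Qed.

Lemma CN_heat_step dt (a b f : S -> R) : 0 < dt ->
  (forall z, (a z - b z) / dt = lap grad div (avg a b) z + f z) ->
  vnrm2 beta (grad a) - vnrm2 beta (grad b) + dt * nrm2 beta (lap grad div (avg a b))
  <= dt * nrm2 beta f.
Proof.
move=> dt_gt0 step; set L := lap grad div (avg a b).
have incr z : a z - b z = dt * (L z + f z) by rewrite -step mulrC divfK ?gt_eqF.
have by_parts : wsum beta (fun z => L z * (a z - b z))
    = 2^-1 * vnrm2 beta (grad b) - 2^-1 * vnrm2 beta (grad a).
  rewrite summation_by_parts grad_avg gradB !vnrm2E; vwsum_collect.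
  by apply: eq_vwsum => z i; ring.
have expand : wsum beta (fun z => L z * (a z - b z))
    = dt * nrm2 beta L + dt * wsum beta (fun z => L z * f z).
  by rewrite nrm2E; wsum_collect; apply: eq_wsum => z; rewrite incr; ring.
have young : - (2^-1 * nrm2 beta L) - 2^-1 * nrm2 beta f
    <= wsum beta (fun z => L z * f z).
  by rewrite !nrm2E; wsum_collect; apply: ler_wsum => // z; have := sqr_ge0 (L z + f z); lra.
by have := ler_wpM2l (ltW dt_gt0) young; lra.
Qed.

(* CN step of the transport equation followed by the projection onto [0, M];
   [b1] and [a] are the projected and unprojected values, [P0], [P1] the
   Lagrange terms at the old and new level. *)
Lemma CN_transport_step (M dt : R) (a b bm b1 P0 P1 cn cnm : S -> R) :
  0 < M -> 0 < dt ->
  (forall z, 0 <= b z <= M) -> (forall z, 0 <= bm z <= M) ->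
  (forall z, (a z - b z) / dt = lap grad div (avg a b) z
     - div (fun y i => eta M (extr b bm y) * grad (extr cn cnm) y i) z + P0 z) ->
  (forall z, (b1 z - a z) / dt = (P1 z - P0 z) / 2) ->
  wsum beta (fun z => b1 z * P1 z) <= 0 -> wsum beta (fun z => b z * P0 z) <= 0 ->
  nrm2 beta b1 + dt ^+ 2 / 4 * nrm2 beta P1 - (nrm2 beta b + dt ^+ 2 / 4 * nrm2 beta P0)
    + dt * vnrm2 beta (grad (avg a b))
  <= dt * M ^+ 2 * (3 * vnrm2 beta (grad cn) + vnrm2 beta (grad cnm)).
Proof.
move=> M_gt0 dt_gt0 b_bd bm_bd step proj sign1 sign0.
have dt_neq0 : dt != 0 by rewrite gt_eqF.
set L := lap grad div (avg a b).
set W := fun y i => eta M (extr b bm y) * grad (extr cn cnm) y i.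
set G := grad (avg a b).
have a_eq z : a z = b z + dt * (L z - div W z + P0 z).
  by rewrite -step mulrC divfK //; ring.
have b1_eq z : b1 z = a z + dt / 2 * (P1 z - P0 z).
  by have := proj z; move/(congr1 (fun t => t * dt)); rewrite divfK // => e; lra.
have energy_id :
    nrm2 beta b1 + dt ^+ 2 / 4 * nrm2 beta P1 - (nrm2 beta b + dt ^+ 2 / 4 * nrm2 beta P0)
    = 2 * dt * wsum beta (fun z => L z * avg a b z)
      - 2 * dt * wsum beta (fun z => div W z * avg a b z)
      + dt * wsum beta (fun z => b z * P0 z) + dt * wsum beta (fun z => b1 z * P1 z).
  by rewrite !nrm2E; wsum_collect; apply: eq_wsum => z; rewrite /avg b1_eq a_eq; field.
have transport_le : vwsum beta (fun z i => W z i * G z i)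
    <= M ^+ 2 / 2 * (3 * vnrm2 beta (grad cn) + vnrm2 beta (grad cnm))
       + 1/2 * vnrm2 beta G.
  rewrite !vnrm2E mulrDr; vwsum_collect; apply: ler_vwsum => // z i.
  have := extr_young (grad cn z i) (grad cnm z i) (G z i)
    (eta_extr_sqr_le M_gt0 (b_bd z) (bm_bd z)).
  by rewrite /W grad_extr /extr /=; lra.
have by_parts_L : wsum beta (fun z => L z * avg a b z) = - vnrm2 beta G.
  exact: summation_by_parts.
have by_parts_W : wsum beta (fun z => div W z * avg a b z)
    = - vwsum beta (fun z i => W z i * G z i).
  exact: summation_by_parts.
have := ler_wpM2l (ltW dt_gt0) transport_le.
have := ler_wpM2l (ltW dt_gt0) sign1; have := ler_wpM2l (ltW dt_gt0) sign0.
by rewrite energy_id by_parts_L by_parts_W !mulr0; lra.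
Qed.

End DiscreteCalculus.

Section CNScheme.
Variables (R : realType) (S : finType) (d : nat) (beta : S -> R).
Variables (grad : (S -> R) -> S -> 'I_d -> R) (div : (S -> 'I_d -> R) -> S -> R).
Variables (M sigma dt : R) (rho c ct rhot lam : nat -> S -> R) (xi : nat -> R).
Hypotheses (Hds : discrete_setting beta grad div) (M_gt0 : 0 < M) (dt_gt0 : 0 < dt).
Hypothesis Hcn : CN_scheme beta grad div M sigma dt rho c ct rhot lam xi.

Local Notation P n := (fun z : S => lam n z * gg' M (rho n z) + xi n).

Let beta_ge0 z : 0 <= beta z. Proof. by case: Hds => /(_ z) /ltW. Qed.
Let dt_neq0 : dt != 0. Proof. by rewrite gt_eqF. Qed.

Let transport_eq n z : (rhot n.+1 z - rho n z) / dt
  = lap grad div (avg (rhot n.+1) (rho n)) z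
    - div (fun y i => eta M (extr (rho n) (rho n.-1) y) * grad (extr (c n) (c n.-1)) y i) z
    + P n z.
Proof. by have [_ [_ [_ [_ [_ [step2 _]]]]]] := Hcn; rewrite step2 addrA. Qed.

Let projection_eq n z : (rho n.+1 z - rhot n.+1 z) / dt = (P n.+1 z - P n z) / 2.
Proof.
have [_ [_ [_ [_ [_ [_ [step3 _]]]]]]] := Hcn; have [proj _] := step3 n.
by rewrite proj; congr (_ / 2); ring.
Qed.

Let complementarity n z :
  [/\ 0 <= gg M (rho n.+1 z), 0 <= lam n.+1 z & lam n.+1 z * gg M (rho n.+1 z) = 0].
Proof. by have [_ [_ [_ [_ [_ [_ [step3 _]]]]]]] := Hcn; have [_ []] := step3 n. Qed.

Lemma CN_lagrange0 : P 0%N =1 (fun _ => 0).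
Proof. by move=> z; have [_ [_ [-> [-> _]]]] := Hcn; rewrite mul0r addr0. Qed.

Lemma CN_mass n : wsum beta (rho n) = wsum beta (rho 0%N).
Proof.
case: n => // n; have [_ [_ [_ [_ [_ [_ [step3 _]]]]]]] := Hcn.
by have [_ [_ mass]] := step3 n; rewrite -!ipr_onef.
Qed.

Lemma CN_wsum_lagrange n : wsum beta (P n) = 0.
Proof.
elim: n => [|n IH]; first by rewrite (eq_wsum _ CN_lagrange0) wsum0.
have transport := wsum_div_step Hds dt_neq0 (transport_eq n).
have projection := wsum_step beta dt_neq0 (projection_eq n).
have halves : wsum beta (fun z => (P n.+1 z - P n z) / 2)
    = 2^-1 * wsum beta (P n.+1) - 2^-1 * wsum beta (P n).
  by wsum_collect; apply: eq_wsum => z; ring.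
move: transport projection; rewrite halves IH !CN_mass => transport projection.
by apply: (mulfI dt_neq0); rewrite mulr0; lra.
Qed.

Lemma CN_rho_bounds n z : 0 <= rho n z <= M.
Proof.
case: n => [|n]; first by have [rho0_bd _] := Hcn.
by have [g_ge0 _ _] := complementarity n z; apply: gg_ge0_bounds.
Qed.

Lemma CN_rho_lagrange_le0 n : wsum beta (fun z => rho n z * P n z) <= 0.
Proof.
case: n => [|n].
  by rewrite (@eq_wsum _ _ beta _ (fun _ => 0)) ?wsum0 // => z; rewrite CN_lagrange0 mulr0.
apply: (wsum_lagrange_le0 _ M_gt0 (CN_rho_bounds 0)).
- by case: Hds.
- exact: CN_mass.
- exact: CN_wsum_lagrange.
- exact: complementarity.
Qed.

Lemma CN_grad_ct n : grad (ct n.+1) = grad (c n.+1).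
Proof.
have [_ [_ [_ [_ [_ [_ [_ step4]]]]]]] := Hcn; have [theta [shift _]] := step4 n.
have c_shift : c n.+1 = fun z => ct n.+1 z + dt * theta.
  by apply/funext => z; rewrite -(shift z) [dt * _]mulrC divfK //; ring.
by rewrite c_shift (grad_addC Hds).
Qed.

Lemma CN_c_energy_step n :
  vnrm2 beta (grad (c n.+1)) - vnrm2 beta (grad (c n))
    + dt * nrm2 beta (lap grad div (avg (ct n.+1) (c n)))
  <= dt * (3 * nrm2 beta (rho n) + nrm2 beta (rho n.-1)).
Proof.
have [_ [_ [_ [_ [step1 _]]]]] := Hcn.
rewrite -CN_grad_ct; apply: le_trans (CN_heat_step Hds dt_gt0 (f := extr (rho n) (rho n.-1)) _) _.
  by move=> z; rewrite step1 -addrA.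
rewrite ler_pM2l // !nrm2E; wsum_collect; apply: ler_wsum => // z.
by have := sqr_ge0 (rho n z + rho n.-1 z); rewrite /extr; lra.
Qed.

Lemma CN_rho_energy_step n :
  nrm2 beta (rho n.+1) + dt ^+ 2 / 4 * nrm2 beta (P n.+1)
    - (nrm2 beta (rho n) + dt ^+ 2 / 4 * nrm2 beta (P n))
    + dt * vnrm2 beta (grad (avg (rhot n.+1) (rho n)))
  <= dt * M ^+ 2 * (3 * vnrm2 beta (grad (c n)) + vnrm2 beta (grad (c n.-1))).
Proof.
exact: (CN_transport_step Hds M_gt0 dt_gt0 (CN_rho_bounds n) (CN_rho_bounds n.-1)
  (transport_eq n) (projection_eq n) (CN_rho_lagrange_le0 n.+1) (CN_rho_lagrange_le0 n)).
Qed.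

Lemma CN_energy_bound (T : R) m : m%:R * dt <= T ->
  nrm2 beta (rho m) + vnrm2 beta (grad (c m))
  + dt * (\sum_(n < m) nrm2 beta (lap grad div (avg (ct n.+1) (c n))))
  + dt ^+ 2 / 4 * nrm2 beta (P m)
  + dt * (\sum_(n < m) vnrm2 beta (grad (avg (rhot n.+1) (rho n))))
  <= gronwall_const (3 * M ^+ 2 + 3) T
     * (nrm2 beta (rho 0%N) + vnrm2 beta (grad (c 0%N))).
Proof.
move=> mT.
pose A n := nrm2 beta (rho n) + dt ^+ 2 / 4 * nrm2 beta (P n).
pose B n := vnrm2 beta (grad (c n)).
pose Dc n := nrm2 beta (lap grad div (avg (ct n.+1) (c n))).
pose Dr n := vnrm2 beta (grad (avg (rhot n.+1) (rho n))).
have dt2_ge0 : 0 <= dt ^+ 2 / 4 by rewrite mulr_ge0 ?sqr_ge0 ?invr_ge0 ?ler0n.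
have rho_le_A n : nrm2 beta (rho n) <= A n by rewrite lerDl mulr_ge0 ?nrm2_ge0.
have A_ge0 n : 0 <= A n by apply: le_trans (rho_le_A n); exact: nrm2_ge0.
have B_ge0 n : 0 <= B n by exact: vnrm2_ge0.
have D_ge0 n : 0 <= Dc n + Dr n.
  by apply: addr_ge0; [exact: nrm2_ge0 | exact: vnrm2_ge0].
have K_ge0 : 0 <= 3 * M ^+ 2 + 3 by have := sqr_ge0 M; lra.
have step n : A n.+1 + B n.+1 - (A n + B n) + dt * (Dc n + Dr n)
    <= dt * (3 * M ^+ 2 + 3) * (A n + B n + (A n.-1 + B n.-1)).
  have coef : 3 * A n + A n.-1 + M ^+ 2 * (3 * B n + B n.-1)
      <= (3 * M ^+ 2 + 3) * (A n + B n + (A n.-1 + B n.-1)).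
    have := mulr_ge0 (sqr_ge0 M) (A_ge0 n); have := mulr_ge0 (sqr_ge0 M) (A_ge0 n.-1).
    have := mulr_ge0 (sqr_ge0 M) (B_ge0 n.-1).
    have := A_ge0 n.-1; have := B_ge0 n; have := B_ge0 n.-1; lra.
  have := ler_wpM2l (ltW dt_gt0) coef.
  have := ler_wpM2l (ltW dt_gt0) (rho_le_A n); have := ler_wpM2l (ltW dt_gt0) (rho_le_A n.-1).
  have := CN_c_energy_step n; have := CN_rho_energy_step n.
  rewrite /A /B /Dc /Dr; lra.
have P0 : nrm2 beta (P 0%N) = 0.
  by rewrite /nrm2 /ipr big1 // => z _; rewrite CN_lagrange0 !mulr0.
have := discrete_gronwall dt_gt0 K_ge0 (fun n => addr_ge0 (A_ge0 n) (B_ge0 n)) D_ge0 step mT.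
by rewrite big_split /= mulrDr /A /B P0 mulr0 addr0; lra.
Qed.

End CNScheme.

Theorem mainTheorem9 (R : realType) (M Tf : R) :
  0 < M -> 0 < Tf ->
  exists C : R, 0 < C /\
  forall (d : nat) (S : finType) (beta : S -> R)
         (grad : (S -> R) -> S -> 'I_d -> R) (div : (S -> 'I_d -> R) -> S -> R)
         (sigma dt : R) (rho c ct rhot lam : nat -> S -> R) (xi : nat -> R),
    (0 < d)%N -> 0 < sigma -> 0 < dt ->
    discrete_setting beta grad div ->
    CN_scheme beta grad div M sigma dt rho c ct rhot lam xi ->
    forall m : nat, (1 <= m)%N -> m%:R * dt <= Tf ->
      nrm2 beta (rho m) + vnrm2 beta (grad (c m))
      + dt * (\sum_(n < m) nrm2 beta (lap grad div (avg (ct n.+1) (c n))))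
      + dt ^+ 2 / 4 * nrm2 beta (fun z => lam m z * gg' M (rho m z) + xi m)
      + dt * (\sum_(n < m) vnrm2 beta (grad (avg (rhot n.+1) (rho n))))
      <= C * (nrm2 beta (rho 0%N) + vnrm2 beta (grad (c 0%N))).
Proof.
move=> M_gt0 Tf_gt0; exists (gronwall_const (3 * M ^+ 2 + 3) Tf); split.
  by apply: gronwall_const_gt0; [have := sqr_ge0 M; lra | exact: ltW].
move=> d S beta grad div sigma dt rho c ct rhot lam xi _ _ dt_gt0 Hds Hcn m _.
exact: (CN_energy_bound Hds M_gt0 dt_gt0 Hcn).
Qed.
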